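(* Let $\Gamma$ be an ordered abelian group. The map $\Delta\mapsto\mathcal{O}_\Delta:=\{\infty\}\cup\{\gamma\in\Gamma:\gamma\in\Delta\text{ or }\gamma>\delta\text{ for all }\delta\in\Delta\}$ is a bijection between the convex subgroups of $\Gamma$ and the valuation hyperrings in the hyperfield $\mathcal{T}(\Gamma)$.
   Context: A hyperfield is $(F,+,\cdot,0,1)$ with $+$ a multivalued operation making $(F,+,0)$ a canonical hypergroup (associative, commutative, unique inverses $-x$ with $0\in x+(-x)$, and $z\in x+y\Rightarrow y\in z+(-x)$), $(F,\cdot)$ commutative with $0$ absorbing, $x(y+z)=xy+xz$ ($xA:=\{xa:a\in A\}$), and $F\setminus\{0\}$ an abelian group with neutral $1\neq0$. A hyperring is defined the same way without the unit/group requirement. For an ordered abelian group $(\Gamma,+,<,0)$ and $\infty>\Gamma$ with $\gamma+\infty=\infty+\gamma=\infty$, $\mathcal{T}(\Gamma)$ is the hyperfield on $\Gamma\cup\{\infty\}$ with multiplication $+$, zero $\infty$, unit $0$, and hyperaddition $x\boxplus\infty=\infty\boxplus x=\{x\}$, $x\boxplus y=\{\min\{x,y\}\}$ for $x\neq y$, $x\boxplus x=\{z:x\le z\le\infty\}$. A relational subhyperring of a hyperfield $F$ is a multiplicatively closed $S\subseteq F$ such that $(S,+_S,\cdot,0)$ is a hyperring with $x+_Sy:=(x+y)\cap S$. A valuation hyperring in $F$ is a relational subhyperring $\mathcal{O}$ such that for every non-zero $x\in F$, $x\in\mathcal{O}$ or $x^{-1}\in\mathcal{O}$. A subgroup $\Delta\le\Gamma$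 is convex if $\delta_1<\gamma<\delta_2$ with $\delta_i\in\Delta$ implies $\gamma\in\Delta$. *)

From mathcomp Require Import all_boot all_algebra.
Set Implicit Arguments. Unset Strict Implicit. Unset Printing Implicit Defensive.
Import GRing.Theory.
Local Open Scope ring_scope.

Definition ordered_abgroup (G : zmodType) (lt : rel G) : Prop :=
  [/\ (forall a, ~~ lt a a),
      (forall a b c, lt a b -> lt b c -> lt a c),
      (forall a b, a != b -> lt a b || lt b a)
    & (forall a b c, lt a b -> lt (a + c) (b + c))].

Definition leo (G : zmodType) (lt : rel G) (a b : G) : bool := (a == b) || lt a b.
Definition mino (G : zmodType) (lt : rel G) (a b : G) : G := if lt a b then a else b.

Definition subgroup (G : zmodType) (D : G -> Prop) : Prop :=
  D 0 /\ (forall a b, D a -> D b -> D (a - b)).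

Definition convex_subgroup (G : zmodType) (lt : rel G) (D : G -> Prop) : Prop :=
  subgroup D /\
  (forall d1 g d2, D d1 -> D d2 -> lt d1 g -> lt g d2 -> D g).

Section Hyper.
Variable F : Type.
Variables (hadd : F -> F -> (F -> Prop)) (mul : F -> F -> F) (zero : F).

Definition hadd_on (S : F -> Prop) (x y : F) : F -> Prop :=
  fun z => hadd x y z /\ S z.

Definition hadd_set_l (S : F -> Prop) (A : F -> Prop) (z : F) : F -> Prop :=
  fun w => exists a, A a /\ hadd_on S a z w.
Definition hadd_set_r (S : F -> Prop) (x : F) (A : F -> Prop) : F -> Prop :=
  fun w => exists a, A a /\ hadd_on S x a w.

Definition is_hyperring_on (S : F -> Prop) : Prop :=
  S zero /\
      (forall x y z w, S x -> S y -> S z ->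
         (hadd_set_l S (hadd_on S x y) z w <-> hadd_set_r S x (hadd_on S y z) w)) /\
      (forall x y w, S x -> S y -> (hadd_on S x y w <-> hadd_on S y x w)) /\
      (forall x w, S x -> (hadd_on S x zero w <-> w = x)) /\
      (forall x, S x -> exists y, [/\ S y, hadd_on S x y zero &
          forall y', S y' -> hadd_on S x y' zero -> y' = y]) /\
      (* reversibility: z ∈ x + y  ->  y ∈ z + (-x) *)
      (forall x y z nx, S x -> S y -> S z -> S nx -> hadd_on S x nx zero ->
          hadd_on S x y z -> hadd_on S z nx y) /\
      (forall x y, S x -> S y -> mul x y = mul y x) /\
      (forall x y z, S x -> S y -> S z -> mul x (mul y z) = mul (mul x y) z) /\
      (forall x, S x -> mul zero x = zero) /\
      (forall x y z w, S x -> S y -> S z ->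
         ((exists a, hadd_on S y z a /\ w = mul x a) <->
          hadd_on S (mul x y) (mul x z) w)).

Definition relational_subhyperring (S : F -> Prop) : Prop :=
  (forall x y, S x -> S y -> S (mul x y)) /\ is_hyperring_on S.

Definition valuation_hyperring (inv : F -> F) (O : F -> Prop) : Prop :=
  relational_subhyperring O /\ (forall x, x <> zero -> O x \/ O (inv x)).

End Hyper.

(* ---------- The hyperfield T(Γ) on option G (None = ∞) ---------- *)
Section Tropical.
Variables (G : zmodType) (lt : rel G).

Definition T_mul (x y : option G) : option G :=
  match x, y with Some a, Some b => Some (a + b) | _, _ => None end.

Definition T_inv (x : option G) : option G :=
  match x with Some a => Some (- a) | None => None end.

Definition T_hadd (x y : option G) : option G -> Prop :=
  match x, y with
  | None, _ => fun z => z = y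
  | _, None => fun z => z = x
  | Some a, Some b =>
      if a == b then (fun z => match z with None => True | Some c => leo lt a c = true end : Prop)
      else (fun z => z = Some (mino lt a b))
  end.

Definition T_zero : option G := None.

Definition O_of (D : G -> Prop) (x : option G) : Prop :=
  match x with None => True | Some g => D g \/ (forall d, D d -> lt d g) end.

Definition T_valuation_hyperring (O : option G -> Prop) : Prop :=
  valuation_hyperring T_hadd T_mul T_zero T_inv O.
End Tropical.

(** In T(Γ), w ∈ x ⊞ y holds exactly when the minimum of x, y, w is attained
    at least twice, and w ∈ (x ⊞ y) ⊞ z exactly when the minimum of x, y, z, w
    is attained at least twice.  All hyperring axioms for a subset S then
    reduce to statements about such minima, and they hold as soon as S
    contains ∞ and is upward closed and closed under multiplication.
    O_Δ has these properties, and convexity of Δ gives the valuation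
    condition.  Conversely a valuation hyperring O is upward closed (by
    distributivity, 0 ∈ e ⊞ e forces -e ∈ O when e < 0 lies in O), so it
    equals O_Δ for its group of units Δ = {g | g ∈ O, -g ∈ O}, which is a
    convex subgroup.  Since Δ is also the group of units of O_Δ, the map
    Δ ↦ O_Δ is injective. *)
From mathcomp Require Import all_boot all_algebra.
From Stdlib Require Import Classical.
Set Implicit Arguments. Unset Strict Implicit. Unset Printing Implicit Defensive.
Import GRing.Theory.
Local Open Scope ring_scope.

Section OrderedGroup.
Variables (G : zmodType) (lt : rel G).
Hypothesis HG : ordered_abgroup lt.

Lemma lt_irr a : ~~ lt a a. Proof. by case: HG. Qed.

Lemma lt_trans a b c : lt a b -> lt b c -> lt a c.
Proof. by case: HG => _ trans _ _; apply: trans. Qed.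

Lemma lt_asym a b : lt a b -> ~~ lt b a.
Proof. by move=> ab; apply/negP => /(lt_trans ab); apply/negP/lt_irr. Qed.

Lemma lt_trichotomy a b : [\/ lt a b, a = b | lt b a].
Proof.
case: (eqVneq a b) => [->|]; first exact: Or32.
by case: HG => _ _ total _ /total/orP[]; [apply: Or31|apply: Or33].
Qed.

Lemma ltD2r a b c : lt (a + c) (b + c) = lt a b.
Proof.
case: HG => _ _ _ ltD; apply/idP/idP => [/(ltD _ _ (- c))|/ltD //].
by rewrite !addrK.
Qed.

Lemma ltD2l a b c : lt (c + a) (c + b) = lt a b.
Proof. by rewrite ![c + _]addrC ltD2r. Qed.

Lemma ltN2 a b : lt (- a) (- b) = lt b a.
Proof. by rewrite -(ltD2r _ _ (a + b)) addKr (addrC a) addKr. Qed.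

Lemma leoE a b : leo lt a b = ~~ lt b a.
Proof.
rewrite /leo; case: (lt_trichotomy a b) => [ab|->|ba].
- by rewrite ab orbT (negbTE (lt_asym ab)).
- by rewrite eqxx lt_irr.
- rewrite (negbTE (lt_asym ba)) ba orbF; apply/eqP => ab.
  by rewrite ab (negbTE (lt_irr b)) in ba.
Qed.

Definition leT (x y : option G) : bool :=
  match x, y with
  | _, None => true
  | None, Some _ => false
  | Some a, Some b => leo lt a b
  end.

Lemma leT_refl x : leT x x.
Proof. by case: x => //= a; rewrite leoE lt_irr. Qed.

Lemma leT_trans x y z : leT x y -> leT y z -> leT x z.
Proof.
case: x => [a|]; case: y => [b|]; case: z => [c|] //=; rewrite !leoE => ab bc.
apply/negP => ca; case: (lt_trichotomy c b) => [cb|cb|bc'].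
- by rewrite cb in bc.
- by rewrite -cb ca in ab.
- by rewrite (lt_trans bc' ca) in ab.
Qed.

Lemma leT_total x y : leT x y || leT y x.
Proof.
case: x => [a|]; case: y => [b|] //=; rewrite !leoE.
by case: (lt_trichotomy a b) => [h|->|h];
  rewrite ?(negbTE (lt_asym h)) ?lt_irr ?orbT.
Qed.

Lemma leT_anti x y : leT x y -> leT y x -> x = y.
Proof.
case: x => [a|]; case: y => [b|] //=; rewrite !leoE => ab ba.
case: (lt_trichotomy a b) => [lt_ab|->|lt_ba] //.
- by rewrite lt_ab in ba.
- by rewrite lt_ba in ab.
Qed.

Lemma nleT_leT x y : ~~ leT x y -> leT y x.
Proof. by move: (leT_total x y) => /orP[->|]. Qed.

Lemma leT_trichotomy x y :
  [\/ leT x y /\ ~~ leT y x, x = y | leT y x /\ ~~ leT x y].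
Proof.
case: (boolP (leT x y)) => xy; case: (boolP (leT y x)) => yx.
- by apply: Or32; apply: leT_anti.
- exact: Or31.
- exact: Or33.
- by move: (leT_total x y); rewrite (negbTE xy) (negbTE yx).
Qed.

Lemma leT_inf x : leT x None. Proof. by case: x. Qed.

Lemma inf_leT x : leT None x -> x = None. Proof. by case: x. Qed.

Lemma leT_mul2l c x y : leT (T_mul (Some c) x) (T_mul (Some c) y) = leT x y.
Proof. by case: x => [a|]; case: y => [b|] //=; rewrite !leoE ltD2l. Qed.

(* Every argument dominates another one, i.e. the minimum of the arguments is
   attained at least twice. *)
Definition min_twice3 x y z : Prop :=
  [/\ leT y x || leT z x, leT x y || leT z y & leT x z || leT y z].

Definition min_twice4 x y z w : Prop :=
  [/\ leT y x || leT z x || leT w x, leT x y || leT z y || leT w y,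
      leT x z || leT y z || leT w z & leT x w || leT y w || leT z w].

Lemma min_twice3_swap x y z : min_twice3 x y z -> min_twice3 y x z.
Proof. by case=> h1 h2 h3; split=> //; rewrite orbC. Qed.

Lemma min_twice3_rot x y z : min_twice3 x y z -> min_twice3 y z x.
Proof. by case=> h1 h2 h3; split=> //; rewrite orbC. Qed.

Lemma min_twice3_refl x y : leT x y -> min_twice3 x y x.
Proof. by move=> xy; split; rewrite ?leT_refl ?xy ?orbT. Qed.

Lemma min_twice3_diag x y : leT x y -> min_twice3 x x y.
Proof. by move=> xy; split; rewrite ?leT_refl ?xy ?orbT. Qed.

Lemma min_twice3_inf x y : min_twice3 x y None -> y = x.
Proof.
case=> yx xy _; apply: leT_anti.
- by case/orP: yx => // /inf_leT ->; rewrite leT_inf.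
- by case/orP: xy => // /inf_leT ->; rewrite leT_inf.
Qed.

Lemma min_twice3_mul2l c x y z :
  min_twice3 (T_mul (Some c) x) (T_mul (Some c) y) (T_mul (Some c) z) <->
  min_twice3 x y z.
Proof. by rewrite /min_twice3 !leT_mul2l. Qed.

Lemma T_haddE x y w : T_hadd lt x y w <->
  (if x == y then (leT x w : Prop) else w = (if leT x y then x else y)).
Proof.
case: x => [a|]; case: y => [b|]; rewrite /T_hadd //=; last by case: w.
rewrite (inj_eq (@Some_inj _)); case: eqP => [->|/eqP ab]; first by case: w.
by rewrite /mino /leo (negbTE ab) /=; case: (lt a b).
Qed.

Lemma T_hadd_min_twice x y w : T_hadd lt x y w <-> min_twice3 x y w.
Proof.
rewrite T_haddE; case: eqP => [<-|xy].
  by split=> [xw|[_ _ /orP[]//]]; apply: min_twice3_diag.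
have strict x' y' : x' <> y' -> leT x' y' -> w = x' <-> min_twice3 x' y' w.
  move=> ne le; split=> [->|]; first exact: min_twice3_refl.
  case=> /orP[yx|wx] _ /orP[xw|yw].
  - by case: ne; apply: leT_anti.
  - by case: ne; apply: leT_anti.
  - exact: leT_anti.
  - by case: ne; apply: leT_anti => //; apply: leT_trans yw wx.
case: ifP => le; first exact: strict.
rewrite strict; first by split; apply: min_twice3_swap.
- by move=> yx; apply: xy.
- exact/nleT_leT/negbT.
Qed.

Lemma min_twice4_swap x y z w : min_twice4 x y z w -> min_twice4 y x z w.
Proof.
case=> h1 h2 h3 h4; split.
- by move: h2; case: (leT x y); case: (leT z y); case: (leT w y).
- by move: h1; case: (leT y x); case: (leT z x); case: (leT w x).
- by move: h3; case: (leT x z); case: (leT y z); case: (leT w z).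
- by move: h4; case: (leT x w); case: (leT y w); case: (leT z w).
Qed.

Lemma min_twice4_rot x y z w : min_twice4 x y z w -> min_twice4 y z x w.
Proof.
case=> h1 h2 h3 h4; split.
- by move: h2; case: (leT x y); case: (leT z y); case: (leT w y).
- by move: h3; case: (leT x z); case: (leT y z); case: (leT w z).
- by move: h1; case: (leT y x); case: (leT z x); case: (leT w x).
- by move: h4; case: (leT x w); case: (leT y w); case: (leT z w).
Qed.

Lemma min_twice3_trans x y z w a :
  min_twice3 x y a -> min_twice3 a z w -> min_twice4 x y z w.
Proof.
case=> [a1 a2 a3] [b1 b2 b3]; split.
- case/orP: a1 => [->//|ax]; case/orP: b1 => za; by rewrite (leT_trans za ax) orbT.
- case/orP: a2 => [->//|ay]; case/orP: b1 => za; by rewrite (leT_trans za ay) orbT.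
- case/orP: b2 => [az|->]; last by rewrite orbT.
  by case/orP: a3 => ba; rewrite (leT_trans ba az) ?orbT.
- case/orP: b3 => [aw|->]; last by rewrite orbT.
  by case/orP: a3 => ba; rewrite (leT_trans ba aw) ?orbT.
Qed.

Lemma min_twice4_strict x y z w : leT x y -> ~~ leT y x ->
  min_twice4 x y z w -> min_twice3 x z w.
Proof.
move=> xy nyx [h1 _ h3 h4]; split.
- by move: h1; rewrite (negbTE nyx).
- by case/orP: h3 => [/orP[->|/(leT_trans xy)->]|->]; rewrite ?orbT.
- by case/orP: h4 => [/orP[->|/(leT_trans xy)->]|->]; rewrite ?orbT.
Qed.

Lemma min_twice4_split x y z w :
  min_twice4 x y z w -> exists a, min_twice3 x y a /\ min_twice3 a z w.
Proof.
case: (leT_trichotomy x y) => [[xy nyx]|<-|[yx nxy]] H.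
- by exists x; split; [apply: min_twice3_refl|apply: min_twice4_strict H].
- case: H => _ _ h3 h4; case: (leT_trichotomy z w) => [[zw nwz]|<-|[wz nzw]].
  + exists z; split; last exact: min_twice3_diag.
    by apply: min_twice3_diag; move: h3; rewrite (negbTE nwz) orbF orbb.
  + case: (boolP (leT x z)) => xz.
      by exists z; split; apply: min_twice3_diag; rewrite ?leT_refl.
    exists x; split; first by apply: min_twice3_diag; rewrite leT_refl.
    by split; rewrite ?leT_refl ?(nleT_leT xz) ?orbT.
  + exists w; split; last exact: min_twice3_refl.
    by apply: min_twice3_diag; move: h4; rewrite (negbTE nzw) orbF orbb.
- exists y; split; first by apply: min_twice3_swap; apply: min_twice3_refl.
  exact: min_twice4_strict (min_twice4_swap H).
Qed.

Lemma T_mulKV (c : G) x : T_mul (Some c) (T_mul (Some (- c)) x) = x.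
Proof. by case: x => [a|] //=; rewrite addNKr. Qed.

Section UpwardClosed.
Variable S : option G -> Prop.
Hypothesis S_inf : S None.
Hypothesis S_up : forall x y, S x -> leT x y -> S y.
Hypothesis S_mul : forall x y, S x -> S y -> S (T_mul x y).

Local Notation hadd := (T_hadd lt).

Lemma hadd_onE x y w : hadd_on hadd S x y w <-> min_twice3 x y w /\ S w.
Proof. by rewrite /hadd_on T_hadd_min_twice. Qed.

Lemma min_twice3_mem x y w : S x -> S y -> min_twice3 x y w -> S w.
Proof. by move=> Sx Sy [_ _ /orP[]]; [apply: S_up Sx|apply: S_up Sy]. Qed.

Lemma hadd_set_lE x y z w : S x -> S y ->
  hadd_set_l hadd S (hadd_on hadd S x y) z w <-> min_twice4 x y z w /\ S w.
Proof.
move=> Sx Sy; split.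
  case=> a [/hadd_onE[xya _] /hadd_onE[azw Sw]]; split=> //.
  exact: min_twice3_trans xya azw.
case=> /min_twice4_split[a [xya azw]] Sw; exists a.
by split; apply/hadd_onE; split=> //; apply: min_twice3_mem xya.
Qed.

Lemma hadd_set_rE x y z w : S y -> S z ->
  hadd_set_r hadd S x (hadd_on hadd S y z) w <-> min_twice4 y z x w /\ S w.
Proof.
move=> Sy Sz; split.
  case=> a [/hadd_onE[yza _] /hadd_onE[xaw Sw]]; split=> //.
  exact: min_twice3_trans yza (min_twice3_swap xaw).
case=> /min_twice4_split[a [yza axw]] Sw; exists a.
split; apply/hadd_onE; split=> //; first exact: min_twice3_mem yza.
exact: min_twice3_swap.
Qed.

Lemma upward_hadd_assoc x y z w : S x -> S y -> S z ->
  hadd_set_l hadd S (hadd_on hadd S x y) z w <->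
  hadd_set_r hadd S x (hadd_on hadd S y z) w.
Proof.
move=> Sx Sy Sz; rewrite hadd_set_lE // hadd_set_rE //.
split=> -[h Sw]; split=> //; first exact: min_twice4_rot.
exact: min_twice4_rot (min_twice4_rot h).
Qed.

Lemma upward_hadd_comm x y w : hadd_on hadd S x y w <-> hadd_on hadd S y x w.
Proof. by rewrite !hadd_onE; split=> -[/min_twice3_swap h Sw]. Qed.

Lemma upward_hadd_inf x w : S x -> hadd_on hadd S x None w <-> w = x.
Proof.
move=> Sx; rewrite hadd_onE.
split=> [[/min_twice3_rot/min_twice3_rot/min_twice3_inf]|->] //.
by split=> //; apply/min_twice3_refl/leT_inf.
Qed.

Lemma upward_hadd_opp x : S x -> exists y, [/\ S y, hadd_on hadd S x y None &
  forall y', S y' -> hadd_on hadd S x y' None -> y' = y].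
Proof.
move=> Sx; exists x; split=> //; last by move=> y' _ /hadd_onE[/min_twice3_inf].
by apply/hadd_onE; split=> //; apply/min_twice3_diag/leT_inf.
Qed.

Lemma upward_hadd_reversible x y z nx : S y -> hadd_on hadd S x nx None ->
  hadd_on hadd S x y z -> hadd_on hadd S z nx y.
Proof.
move=> Sy /hadd_onE[/min_twice3_inf -> _] /hadd_onE[xyz _].
by apply/hadd_onE; split=> //; apply/min_twice3_rot/min_twice3_rot.
Qed.

Lemma upward_hadd_nonempty y z : S y -> S z -> exists a, hadd_on hadd S y z a.
Proof.
move=> Sy Sz; case/orP: (leT_total y z) => [yz|zy].
  by exists y; apply/hadd_onE; split=> //; apply: min_twice3_refl.
by exists z; apply/hadd_onE; split=> //; apply/min_twice3_swap/min_twice3_refl.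
Qed.

Lemma upward_hadd_mul_distr x y z w : S x -> S y -> S z ->
  (exists a, hadd_on hadd S y z a /\ w = T_mul x a) <->
  hadd_on hadd S (T_mul x y) (T_mul x z) w.
Proof.
case: x => [c|] Sx Sy Sz; last first.
  rewrite hadd_onE; split=> [[a [_ ->]]|[/min_twice3_rot/min_twice3_inf-> _]].
    by split=> //; apply: min_twice3_diag; apply: leT_inf.
  by have [a yza] := upward_hadd_nonempty Sy Sz; exists a.
rewrite hadd_onE; split=> [[a [/hadd_onE[yza Sa] ->]]|[cyzw Sw]].
  by split; [apply/min_twice3_mul2l|apply: S_mul].
have yza : min_twice3 y z (T_mul (Some (- c)) w).
  by apply/(min_twice3_mul2l c); rewrite T_mulKV.
exists (T_mul (Some (- c)) w); rewrite T_mulKV; split=> //.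
by apply/hadd_onE; split=> //; apply: min_twice3_mem yza.
Qed.

Lemma upward_relational_subhyperring :
  relational_subhyperring (T_hadd lt) (@T_mul G) (T_zero G) S.
Proof.
split=> //; split=> //; split; first exact: upward_hadd_assoc.
split; first by move=> *; apply: upward_hadd_comm.
split; first exact: upward_hadd_inf.
split; first exact: upward_hadd_opp.
split; first by move=> x y z nx _ Sy _ _; apply: upward_hadd_reversible.
split; first by move=> [a|] [b|] _ _ //=; rewrite addrC.
split; first by move=> [a|] [b|] [c|] _ _ _ //=; rewrite addrA.
by split=> // *; apply: upward_hadd_mul_distr.
Qed.

End UpwardClosed.

Section ConvexSubgroup.
Variable D : G -> Prop.
Hypothesis HD : convex_subgroup lt D.

Lemma Dpred0 : D 0. Proof. by case: HD => [[]]. Qed.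

Lemma DpredB a b : D a -> D b -> D (a - b).
Proof. by case: HD => [[_ DB] _]; apply: DB. Qed.

Lemma DpredN a : D a -> D (- a).
Proof. by move=> Da; rewrite -sub0r; apply: DpredB Dpred0 Da. Qed.

Lemma DpredD a b : D a -> D b -> D (a + b).
Proof. by move=> Da Db; rewrite -[b]opprK; apply/DpredB/DpredN. Qed.

Lemma notD_above_or_below g : ~ D g ->
  (forall d, D d -> lt d g) \/ (forall d, D d -> lt g d).
Proof.
move=> nDg.
case: (classic (exists2 d1, D d1 & ~~ lt d1 g)) => [[d1 Dd1 nd1g]|none].
  right=> d Dd.
  case: (lt_trichotomy g d) => [//|gd|dg]; first by rewrite gd in nDg.
  case: (lt_trichotomy g d1) => [gd1|gd1|d1g].
  - by case: HD => _ conv; case: nDg; apply: conv Dd Dd1 dg gd1.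
  - by rewrite gd1 in nDg.
  - by rewrite d1g in nd1g.
left=> d Dd; case: (boolP (lt d g)) => // ndg.
by case: none; exists d.
Qed.

Lemma O_of_upward x y : O_of lt D x -> leT x y -> O_of lt D y.
Proof.
case: x => [a|]; case: y => [c|] //=; rewrite leoE => Oa /negP nca.
case: (classic (D c)) => [Dc|/notD_above_or_below[above|below]].
- by left.
- by right.

- case: nca; case: Oa => [/below //|above_a].
  exact: lt_trans (below _ Dpred0) (above_a _ Dpred0).
Qed.

Lemma O_of_mul x y : O_of lt D x -> O_of lt D y -> O_of lt D (T_mul x y).
Proof.
case: x => [a|]; case: y => [b|] //= [Da|above_a] [Db|above_b].
- by left; apply: DpredD.
- right=> d Dd; rewrite -(ltD2r _ _ (- a)) addrAC subrr add0r.
  by apply/above_b/DpredB.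
- by right=> d Dd; rewrite -(ltD2r _ _ (- b)) addrK; apply/above_a/DpredB.
- right=> d Dd; apply: lt_trans (above_a _ Dd) _.
  by rewrite -[X in lt X _]addr0 ltD2l; apply/above_b/Dpred0.
Qed.

Lemma O_of_inv x : x <> None -> O_of lt D x \/ O_of lt D (T_inv x).
Proof.
case: x => [g|] // _ /=.
case: (classic (D g)) => [Dg|/notD_above_or_below[above|below]].
- by left; left.
- by left; right.
- by right; right=> d Dd; rewrite -ltN2 opprK; apply/below/DpredN.
Qed.

Lemma O_of_units g : D g <-> O_of lt D (Some g) /\ O_of lt D (Some (- g)).
Proof.
split=> [Dg|[[//|above] [/DpredN|above_opp]]].
- by split; left=> //; apply: DpredN.
- by rewrite opprK.
- have g_neg : lt g 0 by rewrite -ltN2 oppr0; apply/above_opp/Dpred0.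
  by move: (lt_trans (above _ Dpred0) g_neg); rewrite (negbTE (lt_irr 0)).
Qed.

Lemma O_of_valuation_hyperring : T_valuation_hyperring lt (O_of lt D).
Proof.
split; last exact: O_of_inv.
by apply: upward_relational_subhyperring; [|exact: O_of_upward|exact: O_of_mul].
Qed.

End ConvexSubgroup.

Section ValuationHyperring.
Variable O : option G -> Prop.
Hypothesis HO : T_valuation_hyperring lt O.

Lemma O_mul x y : O x -> O y -> O (T_mul x y).
Proof. by case: HO => [[mulO _] _]; apply: mulO. Qed.

Lemma O_inv x : x <> None -> O x \/ O (T_inv x).
Proof. by case: HO => _; apply. Qed.

Lemma O_distr x y z w : O x -> O y -> O z ->
  (exists a, hadd_on (T_hadd lt) O y z a /\ w = T_mul x a) <->
  hadd_on (T_hadd lt) O (T_mul x y) (T_mul x z) w.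
Proof.
by case: HO => [[_ [_ [_ [_ [_ [_ [_ [_ [_ [_ distr]]]]]]]]]] _]; apply: distr.
Qed.

Lemma O_unit : O (Some 0).
Proof. by case: (@O_inv (Some 0)) => //=; rewrite oppr0. Qed.

(* For e < 0, distributivity turns 0 ∈ e ⊞ e = e·(0 ⊞ 0) into 0 = e·a with
   a ∈ O, i.e. a = -e. *)
Lemma O_opp_neg e : O (Some e) -> lt e 0 -> O (Some (- e)).
Proof.
move=> Oe e_neg; have [|a [/hadd_onE[_ Oa] /esym]] :=
  (O_distr (Some 0) Oe O_unit O_unit).2.
  rewrite /= addr0; apply/hadd_onE; split; last exact: O_unit.
  by apply: min_twice3_diag; rewrite /= leoE (negbTE (lt_asym e_neg)).
by case: a Oa => [f|] //= Of [/eqP]; rewrite addrC addr_eq0 => /eqP <-.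
Qed.

Lemma O_upward a c : O (Some a) -> lt a c -> O (Some c).
Proof.
move=> Oa ac; case: (@O_inv (Some c)) => //= Onc.
have ac_neg : lt (a - c) 0 by rewrite -(ltD2r _ _ c) subrK add0r.
have := O_mul Oa (O_opp_neg (O_mul Oa Onc) ac_neg) => /=.
by rewrite opprB addrC subrK.
Qed.

Definition units (g : G) : Prop := O (Some g) /\ O (Some (- g)).

Lemma units_convex : convex_subgroup lt units.
Proof.
split.
  split; first by split; rewrite ?oppr0; apply: O_unit.
  move=> a b [Oa Ona] [Ob Onb]; split; first exact: (O_mul Oa Onb).
  by rewrite opprB addrC; apply: (O_mul Ona Ob).
move=> d1 g d2 [Od1 _] [_ Ond2] d1g gd2; split; first exact: O_upward Od1 d1g.
by apply: O_upward Ond2 _; rewrite ltN2.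
Qed.

Lemma O_of_unitsE x : O x <-> O_of lt units x.
Proof.
case: x => [g|] /=; last by split=> // _; case: HO => [[_ []]].
split=> [Og|[[]//|above]]; last first.
  by apply/(O_upward O_unit)/above; split; rewrite ?oppr0; apply: O_unit.
case: (classic (O (Some (- g)))) => [Ong|nOng]; [by left|right].
move=> d [Od Ond]; case: (lt_trichotomy d g) => [//|dg|gd].
- by rewrite dg in Ond.
- by case: nOng; apply: O_upward Ond _; rewrite ltN2.
Qed.

End ValuationHyperring.

End OrderedGroup.

Theorem mainTheorem16 (G : zmodType) (lt : rel G) (HG : ordered_abgroup lt) :
  (* well-defined: O_Δ is a valuation hyperring for every convex subgroup Δ *)
  (forall D : G -> Prop, convex_subgroup lt D -> T_valuation_hyperring lt (O_of lt D))
  /\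
  (* injective *)
  (forall D1 D2 : G -> Prop, convex_subgroup lt D1 -> convex_subgroup lt D2 ->
     (forall x, O_of lt D1 x <-> O_of lt D2 x) -> forall g, D1 g <-> D2 g)
  /\
  (* surjective *)
  (forall O : option G -> Prop, T_valuation_hyperring lt O ->
     exists D : G -> Prop, convex_subgroup lt D /\ forall x, O x <-> O_of lt D x).
Proof.
split; first by move=> D HD; apply: O_of_valuation_hyperring.
split=> [D1 D2 HD1 HD2 O12 g|O HO].
  by rewrite (O_of_units HG HD1) (O_of_units HG HD2) !O12.
exists (units O); split; first exact: units_convex.
exact: O_of_unitsE.
Qed.
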